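(* Let $H:\underline{\mathcal Z}\to\mathcal Y$ be a linear functional that has the minimal FMP and is minimally continuous, and suppose the subspaces $\operatorname{span}(H\circ\delta^t(\mathcal B))$, $t\le0$, of $\mathcal Y$ are pairwise orthogonal. Let $(\mathbb H,\langle\cdot,\cdot\rangle_{\mathbb H})$ be the reproducing kernel Hilbert space associated to the kernel $K_H(\underline z^1,\underline z^2)=\langle H(\underline z^1),H(\underline z^2)\rangle_{\mathcal Y}$ on $\underline{\mathcal Z}$, with norm $\|\cdot\|_{\mathbb H}$. Let $T\in\mathbb Z_-$ and let $\mathbb H_T\subseteq\mathbb H$ be the subspace of all $f\in\mathbb H$ such that $f(\underline z)$ depends only on $z_T,\dots,z_0$. Let $M\in\mathbb N$, $\underline z^1,\dots,\underline z^M\in\underline{\mathcal Z}$, let $\Lambda:[0,\infty)\to[0,\infty)$ be strictly increasing and $\mathcal E:\mathbb R^M\to\mathbb R$ any function, and for $\underline z\in\underline{\mathcal Z}$ write $\tau_T(\underline z)=\sum_{t=T}^0\delta^t(z_t)$. Then $$\operatorname*{argmin}_{f\in\mathbb H}\ \mathcal E\big(f(\tau_T(\underline z^1)),\dots,f(\tau_T(\underline z^M))\big)+\Lambda(\|f\|_{\mathbb H})=\operatorname*{argmin}_{f\in\mathbb H_T}\ \mathcal E\big(f(\underline z^1),\dots,f(\underline z^M)\big)+\Lambda(\|f\|_{\mathbb H}).$$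
   Context: $(\mathcal Z,\langle\cdot,\cdot\rangle_{\mathcal Z})$ and $(\mathcal Y,\langle\cdot,\cdot\rangle_{\mathcal Y})$ are real Hilbert spaces; $\mathcal B$ is the closed unit ball of $\mathcal Z$. Let $\mathbb Z_-=\{0,-1,-2,\dots\}$; elements of $\mathcal Z^{\mathbb Z_-}$ are sequences $\underline z=(z_t)_{t\le0}$. For $t\in\mathbb Z_-$, $\delta^t:\mathcal Z\to\mathcal Z^{\mathbb Z_-}$ maps $z$ to the sequence with entry $z$ at time $t$ and $0$ elsewhere. Standing assumption: $\underline{\mathcal Z}\subseteq\mathcal Z^{\mathbb Z_-}$ is a set such that (a) $\underline{\mathcal Z}$ is convex and $\underline{\mathcal Z}=-\underline{\mathcal Z}$; (b) $\delta^t(\mathcal B)\subseteq\underline{\mathcal Z}$ for all $t\in\mathbb Z_-$; (c) for every $\underline z\in\underline{\mathcal Z}$ and $J\subseteq\mathbb Z_-$, the sequence $\sum_{t\in J}\delta^t(z_t)$ (equal to $z_t$ for $t\in J$ and $0$ elsewhere) belongs to $\underline{\mathcal Z}$. A functional $H:\underline{\mathcal Z}\to\mathcal Y$ is linear if it is the restriction of a linear map on $\operatorname{span}(\underline{\mathcal Z})$. $H$ is minimally continuous if $H\circ\delta^t:\mathcal B\to\mathcal Y$ is continuous for every $t$; $H$ has the minimal FMP if $H(\sum_{t=T}^0\delta^t(z_t))\to H(\underline z)$ as $T\to-\infty$ for every $\underline z\in\underline{\mathcal Z}$. The argmin sets are sets of minimizers (possibly empty). *)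

From HB Require Import structures.
From mathcomp Require Import all_boot all_order all_algebra.
From mathcomp Require Import boolp classical_sets reals.
Set Implicit Arguments. Unset Strict Implicit. Unset Printing Implicit Defensive.
Import Order.TTheory GRing.Theory Num.Theory.
Local Open Scope ring_scope.

Section Defs.
Variable R : realType.

Section IP.
Variable V : lmodType R.
Variable ip : V -> V -> R.

Definition is_inner_product : Prop :=
  [/\ (forall x y, ip x y = ip y x),
      (forall a x y z, ip (a *: x + y) z = a * ip x z + ip y z)
    & (forall x, x != 0 -> 0 < ip x x)].

Definition ipnorm (x : V) : R := Num.sqrt (ip x x).

Definition ip_complete : Prop :=
  forall u : nat -> V,
    (forall e : R, 0 < e -> exists N : nat, forall m n : nat,
        (N <= m)%N -> (N <= n)%N -> ipnorm (u m - u n) < e) ->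
    exists l : V, forall e : R, 0 < e -> exists N : nat, forall n : nat,
        (N <= n)%N -> ipnorm (u n - l) < e.

Definition is_hilbert : Prop := is_inner_product /\ ip_complete.
End IP.

(* ---------- left-infinite sequences  (z_t)_{t <= 0} ----------
   A sequence indexed by Z_- = {0,-1,-2,...} is encoded as  s : nat -> Z,
   with  s n  standing for  z_{-n}. *)
Section Seq.
Variable Z : lmodType R.

Definition sadd (x y : nat -> Z) : nat -> Z := fun k => x k + y k.
Definition sscale (a : R) (x : nat -> Z) : nat -> Z := fun k => a *: x k.
Definition szero : nat -> Z := fun _ => 0.

Definition delta (n : nat) (z : Z) : nat -> Z :=
  fun k => if k == n then z else 0.

(* sum_{t in J} delta^t(z_t), J a subset of Z_- (encoded by J : pred nat) *)
Definition restr (J : pred nat) (x : nat -> Z) : nat -> Z :=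
  fun k => if J k then x k else 0.

(* tau_{-N}(z) = sum_{t=-N}^0 delta^t(z_t) *)
Definition trunc (N : nat) (x : nat -> Z) : nat -> Z :=
  restr (fun k => (k <= N)%N) x.

Definition standing_assumption (ipZ : Z -> Z -> R) (Zbar : set (nat -> Z))
  : Prop :=
  [/\ (forall x y (l : R), Zbar x -> Zbar y -> 0 <= l -> l <= 1 ->
          Zbar (sadd (sscale l x) (sscale (1 - l) y))),
      (forall x, Zbar x -> Zbar (sscale (-1) x)),
      (forall x, Zbar (sscale (-1) x) -> Zbar x)
    & (forall (n : nat) (z : Z), ipnorm ipZ z <= 1 -> Zbar (delta n z))].

Definition restr_closed (Zbar : set (nat -> Z)) : Prop :=
  forall (J : pred nat) x, Zbar x -> Zbar (restr J x).

Inductive in_span (S : set (nat -> Z)) : (nat -> Z) -> Prop :=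
  | span_zero : in_span S szero
  | span_gen x : S x -> in_span S x
  | span_comb a x y : in_span S x -> in_span S y ->
      in_span S (sadd (sscale a x) y).

End Seq.

Section Functional.
Variables (Z Y : lmodType R) (ipZ : Z -> Z -> R) (ipY : Y -> Y -> R).
Variable Zbar : set (nat -> Z).
Variable H : (nat -> Z) -> Y.

Definition functional_linear : Prop :=
  exists L : (nat -> Z) -> Y,
    (forall x, Zbar x -> L x = H x) /\
    (forall a x y, in_span Zbar x -> in_span Zbar y ->
       L (sadd (sscale a x) y) = a *: L x + L y).

Definition minimally_continuous : Prop :=
  forall (n : nat) (z : Z), ipnorm ipZ z <= 1 ->
    forall e : R, 0 < e -> exists2 d : R, 0 < d &
      forall w : Z, ipnorm ipZ w <= 1 -> ipnorm ipZ (w - z) < d ->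
        ipnorm ipY (H (delta n w) - H (delta n z)) < e.

Definition minimal_FMP : Prop :=
  forall x, Zbar x ->
    forall e : R, 0 < e -> exists N0 : nat, forall N : nat, (N0 <= N)%N ->
      ipnorm ipY (H (trunc N x) - H x) < e.

(* the subspaces span(H o delta^t (B)), t <= 0, are pairwise orthogonal
   (stated on generators; by bilinearity this is orthogonality of spans) *)
Definition orthogonal_components : Prop :=
  forall (n m : nat) (z w : Z), n <> m ->
    ipnorm ipZ z <= 1 -> ipnorm ipZ w <= 1 ->
    ipY (H (delta n z)) (H (delta m w)) = 0.
End Functional.

Section RKHS.
Variable X : Type.
Variable K : X -> X -> R.
Variables (HS : set (X -> R)) (ipH : (X -> R) -> (X -> R) -> R).

Definition fadd (f g : X -> R) : X -> R := fun x => f x + g x.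
Definition fscale (a : R) (f : X -> R) : X -> R := fun x => a * f x.
Definition Hnorm (f : X -> R) : R := Num.sqrt (ipH f f).

(* (HS, ipH) is the reproducing kernel Hilbert space of K:
   a Hilbert space of real functions on X containing every K(., x)
   and satisfying the reproducing property. (Unique by Moore-Aronszajn.) *)
Definition is_RKHS : Prop :=
  HS (fun _ => 0) /\
  (forall a f g, HS f -> HS g -> HS (fadd (fscale a f) g)) /\
  (forall f g, HS f -> HS g -> ipH f g = ipH g f) /\
  (forall a f g h, HS f -> HS g -> HS h ->
      ipH (fadd (fscale a f) g) h = a * ipH f h + ipH g h) /\
  (forall f, HS f -> f <> (fun _ => 0) -> 0 < ipH f f) /\
  (forall u : nat -> X -> R, (forall n, HS (u n)) ->
    (forall e : R, 0 < e -> exists N : nat, forall m n : nat,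
        (N <= m)%N -> (N <= n)%N ->
        Hnorm (fadd (u m) (fscale (-1) (u n))) < e) ->
    exists2 l, HS l & forall e : R, 0 < e -> exists N : nat,
        forall n : nat, (N <= n)%N ->
        Hnorm (fadd (u n) (fscale (-1) l)) < e) /\
  (forall x, HS (fun y => K y x)) /\
  (forall f x, HS f -> f x = ipH f (fun y => K y x)).
End RKHS.

Definition argmin (T : Type) (S : set T) (F : T -> R) : set T :=
  [set x | S x /\ forall y, S y -> F x <= F y].

End Defs.

(* tau_{-N} as a map Zbar -> Zbar, using standing assumption (c) *)
Definition tauZB (R : realType) (Z : lmodType R) (Zbar : set (nat -> Z))
  (hc : restr_closed Zbar) (N : nat) (z : {x | Zbar x}) : {x | Zbar x} :=
  exist _ (trunc N (proj1_sig z)) (hc _ _ (proj2_sig z)).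

(* H_T (T = -N): functions of HS depending only on z_{-N},...,z_0 *)
Definition depends_on_window (R : realType) (Z : lmodType R)
  (Zbar : set (nat -> Z)) (N : nat) (f : {x | Zbar x} -> R) : Prop :=
  forall z1 z2 : {x | Zbar x},
    (forall k, (k <= N)%N -> proj1_sig z1 k = proj1_sig z2 k) -> f z1 = f z2.

(* Project f orthogonally onto the span of the kernel sections K(., tau_T z^i).
   Orthogonality of the components of H and the fading memory property give
   <H z, H (tau_T x)> = <H (tau_T z), H (tau_T x)>, so these kernel sections,
   hence the projection h, only depend on the window z_T, ..., z_0.  By the
   reproducing property h(z^i) = h(tau_T z^i) = f(tau_T z^i), while ||h|| < ||f||
   unless h = f; since Lambda is strictly increasing, both problems have the
   same minimizers. *)

From HB Require Import structures.
From mathcomp Require Import all_boot all_order all_algebra.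
From mathcomp Require Import boolp classical_sets reals.
From mathcomp Require Import ring lra.
Import Order.TTheory GRing.Theory Num.Theory.
Set Implicit Arguments. Unset Strict Implicit. Unset Printing Implicit Defensive.
Local Open Scope ring_scope.

Section InnerProduct.
Variables (R : realType) (V : lmodType R) (ip : V -> V -> R).
Hypothesis ip_inner : is_inner_product ip.

Lemma ipC x y : ip x y = ip y x.
Proof. by case: ip_inner. Qed.

Lemma ipDZl a x y z : ip (a *: x + y) z = a * ip x z + ip y z.
Proof. by case: ip_inner. Qed.

Lemma ip0l z : ip 0 z = 0.
Proof. by have := ipDZl 1 0 0 z; rewrite scaler0 addr0 mul1r; lra. Qed.

Lemma ipDl x y z : ip (x + y) z = ip x z + ip y z.
Proof. by have := ipDZl 1 x y z; rewrite scale1r mul1r. Qed.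

Lemma ipZl a x z : ip (a *: x) z = a * ip x z.
Proof. by have := ipDZl a x 0 z; rewrite addr0 ip0l addr0. Qed.

Lemma ipBl x y z : ip (x - y) z = ip x z - ip y z.
Proof. by rewrite ipDl -scaleN1r ipZl mulN1r. Qed.

Lemma ipDr x y z : ip z (x + y) = ip z x + ip z y.
Proof. by rewrite ipC ipDl !(ipC _ z). Qed.

Lemma ipZr a x z : ip z (a *: x) = a * ip z x.
Proof. by rewrite ipC ipZl ipC. Qed.

Lemma ip_ge0 x : 0 <= ip x x.
Proof.
have [->|x0] := eqVneq x 0; first by rewrite ip0l.
by apply: ltW; case: ip_inner => _ _; apply.
Qed.

Lemma ipnorm_ge0 x : 0 <= ipnorm ip x.
Proof. exact: sqrtr_ge0. Qed.

Lemma ipnormZ a x : ipnorm ip (a *: x) = `|a| * ipnorm ip x.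
Proof. by rewrite /ipnorm ipZl ipZr mulrA -expr2 sqrtrM ?sqr_ge0 // sqrtr_sqr. Qed.

Lemma ip_sqr_le x y : ip x y ^+ 2 <= ip x x * ip y y.
Proof.
have [->|y0] := eqVneq y 0; first by rewrite ipC !ip0l expr0n mulr0.
have yy : 0 < ip y y by case: ip_inner => _ _; apply.
(* expand [0 <= |B x - c y|^2 = B (B |x|^2 - c^2)] with [B = <y,y>], [c = <x,y>] *)
have := ip_ge0 (ip y y *: x + (- ip x y) *: y).
rewrite ipDl !ipDr !ipZl !ipZr (ipC y x) => h.
by rewrite -(ler_pM2l yy); nra.
Qed.

Lemma ip_norm_le x y : `|ip x y| <= ipnorm ip x * ipnorm ip y.
Proof.
by rewrite /ipnorm -sqrtrM ?ip_ge0 // -sqrtr_sqr ler_wsqrtr // ip_sqr_le.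
Qed.

Lemma ip_eq0_approx a b :
  (forall e : R, 0 < e -> exists2 a', ipnorm ip (a' - a) < e & ip a' b = 0) ->
  ip a b = 0.
Proof.
move=> approx; apply/eqP/negPn/negP => ab0.
have nb := ipnorm_ge0 b.
have c0 : 0 < `|ip a b| by rewrite normr_gt0.
set e := `|ip a b| / (ipnorm ip b + 1).
have e0 : 0 < e by rewrite divr_gt0 //; lra.
have eb : e * (ipnorm ip b + 1) = `|ip a b| by rewrite mulfVK //; lra.
have [a' aa' a'b] := approx e e0.
have := ip_norm_le (a' - a) b; rewrite ipBl a'b sub0r normrN.
have := ipnorm_ge0 (a' - a).
nra.
Qed.

End InnerProduct.

Section Sequences.
Variables (R : realType) (Z Y : lmodType R).
Variables (ipZ : Z -> Z -> R) (ipY : Y -> Y -> R).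
Hypotheses (ipZ_inner : is_inner_product ipZ) (ipY_inner : is_inner_product ipY).
Variable Zbar : set (nat -> Z).
Hypothesis delta_mem : forall n z, ipnorm ipZ z <= 1 -> Zbar (delta n z).
Hypothesis Zbar_restr : restr_closed Zbar.
Variables (H L : (nat -> Z) -> Y).
Hypothesis L_H : forall x, Zbar x -> L x = H x.
Hypothesis L_lin : forall a x y, in_span Zbar x -> in_span Zbar y ->
  L (sadd (sscale a x) y) = a *: L x + L y.
Hypothesis H_orth : orthogonal_components ipZ ipY H.
Hypothesis H_fmp : minimal_FMP ipY Zbar H.

Lemma sadd_sscale1 (x y : nat -> Z) : sadd (sscale 1 x) y = sadd x y.
Proof. by apply: funext => k; rewrite /sadd /sscale scale1r. Qed.

Lemma L_szero : L (szero Z) = 0.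
Proof.
have := @L_lin 1 _ _ (span_zero Zbar) (span_zero Zbar).
rewrite sadd_sscale1 scale1r.
have -> : sadd (szero Z) (szero Z) = szero Z.
  by apply: funext => k; rewrite /sadd /szero addr0.
by move/(congr1 (fun v => v - L (szero Z))); rewrite subrr addrK.
Qed.

Lemma span_add x y : in_span Zbar x -> in_span Zbar y -> in_span Zbar (sadd x y).
Proof. by move=> sx sy; rewrite -sadd_sscale1; apply: span_comb. Qed.

Lemma L_add x y : in_span Zbar x -> in_span Zbar y -> L (sadd x y) = L x + L y.
Proof. by move=> sx sy; rewrite -sadd_sscale1 L_lin // scale1r. Qed.

Lemma delta0 n : delta n (0 : Z) = szero Z.
Proof. by apply: funext => k; rewrite /delta /szero if_same. Qed.

(* [Zbar] and the orthogonality hypothesis only concern deltas of the unit ball. *)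
Lemma delta_rescale n w : exists c w', ipnorm ipZ w' <= 1 /\
  delta n w = sadd (sscale c (delta n w')) (szero Z).
Proof.
have nw := ipnorm_ge0 ipZ w.
set c := ipnorm ipZ w + 1; have c0 : 0 < c by rewrite /c; lra.
exists c, (c^-1 *: w); split.
  rewrite ipnormZ // ger0_norm; last by rewrite invr_ge0 ltW.
  by rewrite mulrC ler_pdivrMr // mul1r /c; lra.
apply: funext => k; rewrite /sadd /sscale /szero /delta addr0.
by case: (k == n); rewrite ?scaler0 // scalerA mulfV ?gt_eqF // scale1r.
Qed.

Lemma delta_in_span n w : in_span Zbar (delta n w).
Proof.
have [c [w' [w'1 ->]]] := delta_rescale n w.
by apply: span_comb; [apply: span_gen; apply: delta_mem | apply: span_zero].
Qed.

Lemma L_delta_orth m n v w : m <> n -> ipY (L (delta m v)) (L (delta n w)) = 0.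
Proof.
have L_rescale k u : exists c u', ipnorm ipZ u' <= 1 /\
    L (delta k u) = c *: H (delta k u').
  have [c [u' [u'1 ->]]] := delta_rescale k u.
  exists c, u'; split => //; rewrite L_lin ?L_szero ?addr0 ?L_H //.
  - exact: delta_mem.
  - by apply: span_gen; apply: delta_mem.
  - exact: span_zero.
move=> mn; have [c [v' [v'1 ->]]] := L_rescale m v.
have [d [w' [w'1 ->]]] := L_rescale n w.
by rewrite ipZl // ipZr // H_orth // !mulr0.
Qed.

Lemma trunc0 (x : nat -> Z) : trunc 0 x = delta 0 (x 0%N).
Proof.
by apply: funext => k; rewrite /trunc /restr /delta leqn0; case: eqP => // ->.
Qed.

Lemma truncS n (x : nat -> Z) :
  trunc n.+1 x = sadd (trunc n x) (delta n.+1 (x n.+1)).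
Proof.
apply: funext => k; rewrite /trunc /restr /delta /sadd -[(k <= n)%N]ltnS.
by case: ltngtP => [|_|->]; rewrite ?addr0 ?add0r.
Qed.

Lemma trunc_in_span n x : in_span Zbar (trunc n x).
Proof.
elim: n => [|n IH]; rewrite ?trunc0 ?truncS; first exact: delta_in_span.
by apply: span_add => //; apply: delta_in_span.
Qed.

Lemma L_truncS n x :
  L (trunc n.+1 x) = L (trunc n x) + L (delta n.+1 (x n.+1)).
Proof.
by rewrite truncS; apply: L_add; [apply: trunc_in_span | apply: delta_in_span].
Qed.

Lemma L_delta_trunc_orth m w n x :
  (n < m)%N -> ipY (L (delta m w)) (L (trunc n x)) = 0.
Proof.
elim: n => [|n IH] nm; first by rewrite trunc0 L_delta_orth // => m0; rewrite m0 in nm.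
rewrite L_truncS (ipDr ipY_inner) IH ?(ltnW nm) // add0r.
by rewrite L_delta_orth // => e; rewrite e ltnn in nm.
Qed.

Lemma L_trunc_orth k x n y : (forall j, (j <= n)%N -> x j = 0) ->
  ipY (L (trunc k x)) (L (trunc n y)) = 0.
Proof.
move=> x0; have Lx_orth j : ipY (L (delta j (x j))) (L (trunc n y)) = 0.
  have [/x0 ->|nj] := leqP j n; last exact: L_delta_trunc_orth.
  by rewrite delta0 L_szero (ip0l ipY_inner).
elim: k => [|k IH]; first by rewrite trunc0.
by rewrite L_truncS (ipDl ipY_inner) IH Lx_orth addr0.
Qed.

(* The tail of [z] after time [-n] is a limit of finite sums of deltas at
   earlier times, hence orthogonal to the window part of [x] (minimal FMP). *)
Lemma H_trunc_inner n z x : Zbar z -> Zbar x ->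
  ipY (H z) (H (trunc n x)) = ipY (H (trunc n z)) (H (trunc n x)).
Proof.
move=> zZ xZ; set tl := restr (fun k => (n < k)%N) z.
have tlZ : Zbar tl by apply: Zbar_restr.
have z_split : z = sadd (trunc n z) tl.
  apply: funext => k; rewrite /sadd /tl /trunc /restr.
  by case: leqP; rewrite ?addr0 ?add0r.
have -> : H z = H (trunc n z) + H tl.
  rewrite -L_H // {1}z_split L_add ?L_H //; first exact: Zbar_restr.
  - exact: trunc_in_span.
  - exact: span_gen.
rewrite (ipDl ipY_inner) [ipY (H tl) _](_ : _ = 0) ?addr0 //.
apply: ip_eq0_approx => // e e0; have [k0 fmp] := H_fmp tlZ e0.
exists (H (trunc k0 tl)); first exact: fmp.
rewrite -!L_H; try exact: Zbar_restr.
by apply: L_trunc_orth => j jn; rewrite /tl /restr ltnNge jn.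
Qed.

End Sequences.

Section FunctionSpace.
Variables (R : realType) (X : Type).
Variables (HS : set (X -> R)) (ipH : (X -> R) -> (X -> R) -> R).
Local Notation f0 := (fun _ : X => 0 : R).
Hypothesis HS0 : HS f0.
Hypothesis HS_lin : forall a f g, HS f -> HS g -> HS (fadd (fscale a f) g).
Hypothesis ipH_sym : forall f g, HS f -> HS g -> ipH f g = ipH g f.
Hypothesis ipH_DZl : forall a f g h, HS f -> HS g -> HS h ->
  ipH (fadd (fscale a f) g) h = a * ipH f h + ipH g h.
Hypothesis ipH_pos : forall f, HS f -> f <> f0 -> 0 < ipH f f.

Definition fsub (f g : X -> R) : X -> R := fadd (fscale (-1) g) f.

Lemma HS_sub f g : HS f -> HS g -> HS (fsub f g).
Proof. by move=> Hf Hg; apply: HS_lin. Qed.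

Lemma ipH0l h : HS h -> ipH f0 h = 0.
Proof.
move=> Hh; have := ipH_DZl 1 HS0 HS0 Hh.
have -> : fadd (fscale 1 f0) f0 = f0.
  by apply: funext => x; rewrite /fadd /fscale mulr0 addr0.
by rewrite mul1r; lra.
Qed.

Lemma ipH_subl f g h : HS f -> HS g -> HS h ->
  ipH (fsub f g) h = ipH f h - ipH g h.
Proof. by move=> Hf Hg Hh; rewrite ipH_DZl //; lra. Qed.

Lemma ipH_DZr a f g h : HS f -> HS g -> HS h ->
  ipH h (fadd (fscale a f) g) = a * ipH h f + ipH h g.
Proof.
by move=> Hf Hg Hh; rewrite ipH_sym ?ipH_DZl ?(ipH_sym Hh) //; apply: HS_lin.
Qed.

Lemma ipH_ge0 f : HS f -> 0 <= ipH f f.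
Proof.
move=> Hf; have [->|f_neq0] := pselect (f = f0); first by rewrite ipH0l.
exact/ltW/ipH_pos.
Qed.

Lemma ipH_self_eq0 f : HS f -> ipH f f = 0 -> f = f0.
Proof. by move=> Hf ff0; apply: contrapT => /(ipH_pos Hf); rewrite ff0 ltxx. Qed.

Lemma fsub_add f h : fadd (fscale 1 h) (fsub f h) = f.
Proof. by apply: funext => x; rewrite /fsub /fadd /fscale; ring. Qed.

Lemma Hnorm_lt_or_eq f h : HS f -> HS h -> ipH (fsub f h) h = 0 ->
  Hnorm ipH h < Hnorm ipH f \/ h = f.
Proof.
move=> Hf Hh; rewrite -{2 3}(fsub_add f h).
move: (fsub f h) (HS_sub Hf Hh) => r Hr orth.
set f' := fadd _ r; have Hf' : HS f' by apply: HS_lin.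
have pythagoras : ipH f' f' = ipH h h + ipH r r.
  rewrite ipH_DZl // !ipH_DZr // (ipH_sym Hh Hr) orth; lra.
have [rr0|rr_neq0] := pselect (ipH r r = 0).
  right; rewrite /f' (ipH_self_eq0 Hr rr0).
  by apply: funext => x; rewrite /fadd /fscale; ring.
have rr_pos : 0 < ipH r r by rewrite lt_def ipH_ge0 // andbT; apply/eqP.
have := ipH_ge0 Hh; left; rewrite /Hnorm ltr_sqrt pythagoras; lra.
Qed.

Section Projection.
Variable Q : set (X -> R).
Hypotheses (Q_HS : forall f, Q f -> HS f) (Q0 : Q f0).
Hypothesis Q_lin : forall a f g, Q f -> Q g -> Q (fadd (fscale a f) g).
Variable s : nat -> X -> R.
Hypothesis Q_s : forall k, Q (s k).

(* [h] is the orthogonal projection of [f] onto the span of [s 0, ..., s (n-1)];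
   the last clause says that [h] lies in that span. *)
Definition is_projection n f h := [/\ Q h,
  forall k, (k < n)%N -> ipH (fsub f h) (s k) = 0 &
  forall w, HS w -> (forall k, (k < n)%N -> ipH w (s k) = 0) -> ipH w h = 0].

Lemma is_projectionS n f h p : HS f ->
  is_projection n f h -> is_projection n (s n) p ->
  exists h', is_projection n.+1 f h'.
Proof.
move=> Hf [Qh fh_orth h_span] [Qp sp_orth p_span].
have [Hh Hp Hs] := And3 (Q_HS Qh) (Q_HS Qp) (Q_HS (Q_s n)).
have [r [Qr r_def]] : exists r, Q r /\ fsub (s n) p = r.
  by exists (fsub (s n) p); split => //; apply: Q_lin.
rewrite r_def in sp_orth.
have Hr := Q_HS Qr; have Hfh := HS_sub Hf Hh.
(* when [r = 0], the division yields [c = 0] and [h'] is just [h] *)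
set c := ipH (fsub f h) r / ipH r r.
have cr : c * ipH r r = ipH (fsub f h) r.
  have [rr0|rr_neq0] := eqVneq (ipH r r) 0; last by rewrite mulfVK.
  by rewrite rr0 mulr0 (ipH_self_eq0 Hr rr0) ipH_sym ?ipH0l.
have s_split : s n = fadd (fscale 1 p) r by rewrite -r_def fsub_add.
have w_sn w : HS w -> ipH w (s n) = ipH w p + ipH w r.
  by move=> Hw; rewrite s_split ipH_DZr // mul1r.
exists (fadd (fscale c r) h); split; first exact: Q_lin.
- move=> k; have Hk := Q_HS (Q_s k).
  rewrite ltnS leq_eqVlt => /orP [/eqP ->|kn];
    rewrite ipH_subl ?ipH_DZl //; try exact: HS_lin.
  + have := p_span _ Hfh fh_orth; have := p_span _ Hr sp_orth; move: cr.
    by rewrite !w_sn // !ipH_subl // => cr -> fhp; rewrite add0r; lra.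
  + by have := fh_orth k kn; rewrite ipH_subl // (sp_orth k kn); lra.
- move=> w Hw w_orth.
  have w_orth_n k : (k < n)%N -> ipH w (s k) = 0 by move=> kn; apply/w_orth/ltnW.
  have w_r : ipH w r = 0.
    by rewrite -r_def /fsub ipH_DZr // p_span // mulr0 add0r w_orth.
  by rewrite ipH_DZr // h_span // w_r mulr0 add0r.
Qed.

Lemma projection_exists n f : HS f -> exists h, is_projection n f h.
Proof.
elim: n f => [|n IH] f Hf.
  by exists f0; split=> // w Hw _; rewrite ipH_sym ?ipH0l.
have [h Ph] := IH f Hf; have [p Pp] := IH (s n) (Q_HS (Q_s n)).
exact: is_projectionS Ph Pp.
Qed.

Lemma projection_Hnorm n f h : HS f -> is_projection n f h ->
  Hnorm ipH h < Hnorm ipH f \/ h = f.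
Proof.
move=> Hf [Qh fh_orth h_span]; have Hh := Q_HS Qh.
by apply: Hnorm_lt_or_eq => //; apply: h_span fh_orth; apply: HS_sub.
Qed.

End Projection.

End FunctionSpace.

Lemma argmin_eq_retract (R : realType) (T : Type) (B A : set T) (F G : T -> R) :
  (forall f, A f -> B f) -> (forall f, A f -> F f = G f) ->
  (forall f, B f -> exists2 h, A h & F h < F f \/ h = f) ->
  argmin B F = argmin A G.
Proof.
move=> AB FG retract; apply/seteqP; split => f.
- move=> [Bf f_min]; have [h Ah [Fhf|hf]] := retract f Bf.
    by have := f_min h (AB h Ah); rewrite leNgt Fhf.
  subst h; split=> // g Ag; rewrite -!FG //; exact: f_min (AB g Ag).
- move=> [Af f_min]; split=> [|g Bg]; first exact: AB.
  have [h Ah Fhg] := retract g Bg; apply: (le_trans (y := F h)).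
    by rewrite !FG //; apply: f_min.
  by case: Fhg => [/ltW|->].
Qed.

Lemma tauZB_window (R : realType) (Z : lmodType R) (Zbar : set (nat -> Z))
    (hc : restr_closed Zbar) N (g : {x | Zbar x} -> R) :
  depends_on_window N g -> forall z, g (tauZB hc N z) = g z.
Proof. by move=> g_win z; apply: g_win => k kN; rewrite /= /trunc /restr kN. Qed.

Section Window.
Variables (R : realType) (Z Y : lmodType R).
Variables (ipZ : Z -> Z -> R) (ipY : Y -> Y -> R).
Hypotheses (ipZ_inner : is_inner_product ipZ) (ipY_inner : is_inner_product ipY).
Variable Zbar : set (nat -> Z).
Hypothesis delta_mem : forall n z, ipnorm ipZ z <= 1 -> Zbar (delta n z).
Hypothesis Zbar_restr : restr_closed Zbar.
Variable H : (nat -> Z) -> Y.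
Hypotheses (H_lin : functional_linear Zbar H) (H_fmp : minimal_FMP ipY Zbar H).
Hypothesis H_orth : orthogonal_components ipZ ipY H.
Local Notation X := {x | Zbar x}.
Variables (HS : set (X -> R)) (ipH : (X -> R) -> (X -> R) -> R).
Hypothesis HS_RKHS :
  is_RKHS (fun z1 z2 : X => ipY (H (sval z1)) (H (sval z2))) HS ipH.
Variable N : nat.

Lemma kernel_trunc_window (x : X) :
  depends_on_window N (fun z : X => ipY (H (sval z)) (H (trunc N (sval x)))).
Proof.
have [L [L_H L_lin]] := H_lin.
have trunc_inner := H_trunc_inner ipZ_inner ipY_inner delta_mem Zbar_restr
  L_H L_lin H_orth H_fmp N.
move=> z1 z2 z12.
rewrite (trunc_inner (sval z1)) ?(trunc_inner (sval z2)); try exact: svalP.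
suff -> : trunc N (sval z1) = trunc N (sval z2) by [].
by apply: funext => k; rewrite /trunc /restr; case: leqP => // /z12.
Qed.

Lemma window_projection M (zs : 'I_M -> X) f : HS f -> exists2 h,
  HS h /\ depends_on_window N h &
  (forall i, h (zs i) = f (tauZB Zbar_restr N (zs i))) /\
  (Hnorm ipH h < Hnorm ipH f \/ h = f).
Proof.
have [HS0 [HS_lin [ipH_sym [ipH_DZl [ipH_pos [_ [HS_K reproduce]]]]]]] := HS_RKHS.
set Q := fun h : X -> R => HS h /\ depends_on_window N h.
have Q_lin a f1 f2 : Q f1 -> Q f2 -> Q (fadd (fscale a f1) f2).
  move=> [H1 W1] [H2 W2]; split; first exact: HS_lin.
  by move=> z1 z2 z12; rewrite /fadd /fscale (W1 _ _ z12) (W2 _ _ z12).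
set s := fun k => if insub k is Some i
  then fun z : X => ipY (H (sval z)) (H (sval (tauZB Zbar_restr N (zs i))))
  else fun=> 0.
have Q_s k : Q (s k).
  rewrite /s; case: insub => [i|]; last by split => // z1 z2.
  by split; [exact: HS_K | exact: kernel_trunc_window].
have Q_HS h : Q h -> HS h by case.
have Q0 : Q (fun=> 0) by [].
move=> Hf; have [h Ph] :=
  projection_exists HS0 HS_lin ipH_sym ipH_DZl ipH_pos Q_HS Q0 Q_lin Q_s M Hf.
exists h; first by case: Ph.
split; last exact: projection_Hnorm Ph.
move=> i; case: Ph => Qh fh_orth _.
rewrite -(tauZB_window Zbar_restr Qh.2) reproduce ?(reproduce f) //; last exact: Qh.1.
have := fh_orth i (ltn_ord i); rewrite /s valK (ipH_subl ipH_DZl) //; [|exact: Qh.1].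
by move/eqP; rewrite subr_eq0 => /eqP ->.
Qed.

End Window.

Unset Implicit Arguments.

Theorem proposition4p4 (R : realType) (Z Y : lmodType R)
  (ipZ : Z -> Z -> R) (ipY : Y -> Y -> R)
  (hZ : is_hilbert ipZ) (hY : is_hilbert ipY)
  (Zbar : set (nat -> Z))
  (hab : standing_assumption ipZ Zbar) (hc : restr_closed Zbar)
  (H : (nat -> Z) -> Y)
  (hlin : functional_linear Zbar H)
  (hfmp : minimal_FMP ipY Zbar H)
  (hcont : minimally_continuous ipZ ipY H)
  (horth : orthogonal_components ipZ ipY H)
  (HS : set ({x | Zbar x} -> R))
  (ipH : ({x | Zbar x} -> R) -> ({x | Zbar x} -> R) -> R)
  (hRKHS : is_RKHS
     (fun z1 z2 : {x | Zbar x} => ipY (H (proj1_sig z1)) (H (proj1_sig z2)))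
     HS ipH)
  (N : nat) (M : nat) (zs : 'I_M -> {x | Zbar x})
  (Lam : R -> R)
  (hLam0 : forall x, 0 <= x -> 0 <= Lam x)
  (hLam : forall x y, 0 <= x -> x < y -> Lam x < Lam y)
  (E : 'rV[R]_M -> R) :
  argmin HS
    (fun f => E (\row_(i < M) f (tauZB hc N (zs i))) + Lam (Hnorm ipH f))
  = argmin [set f | HS f /\ depends_on_window N f]
    (fun f => E (\row_(i < M) f (zs i)) + Lam (Hnorm ipH f)).
Proof.
have [[ipZ_inner _] [ipY_inner _] [_ _ _ delta_mem]] := And3 hZ hY hab.
apply: argmin_eq_retract => [f [] // | f [_ f_win] | f Hf].
  by congr (E _ + _); apply/rowP => i; rewrite !mxE tauZB_window.
have [h Qh [h_zs h_norm]] := window_projection ipZ_inner ipY_inner delta_mem hc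
  hlin hfmp horth hRKHS N zs Hf.
exists h => //; case: h_norm => [h_lt|]; [left|by right].
have -> : \row_(i < M) h (tauZB hc N (zs i)) = \row_(i < M) f (tauZB hc N (zs i)).
  by apply/rowP => i; rewrite !mxE tauZB_window ?h_zs //; case: Qh.
by rewrite ltrD2l hLam // sqrtr_ge0.
Qed.
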